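(* Let $\mathcal A$ be a GRA over $(\mathbb N;=)$ and $\mathcal B$ a one-register GURA over $(\mathbb N;=)$ over the same alphabet. Let $S=(\ell^{\mathcal A}(\mathbf d),C)$ be a synchronized configuration such that $C$ is essentially coverable, and let $a\ne b$ with $a,b\in\mathrm{supp}(C)$ and $a\equiv_S b$. Then $S$ reaches a bad synchronized configuration in $(\mathcal S,\Rightarrow)$ if and only if $S'=(\ell^{\mathcal A}(\mathbf d),(C\setminus C_b^+)\cup C_b^-)$ reaches a bad synchronized configuration in $(\mathcal S,\Rightarrow)$.
   Context: A GRA over $(\mathbb N;=)$ and finite alphabet $\Sigma$ is $(\mathcal R,\mathcal L,\ell_{init},\mathcal L_{acc},E)$ with finite registers $\mathcal R$, locations, initial location, accepting locations, and finite edges $(\ell,\sigma,\phi,\ell')$ where $\phi$ is a Boolean combination of equalities $t_1=t_2$, $t_i\in\{\#\}\cup\{r,\dot r:r\in\mathcal R\}$, interpreted on $(\mathbf u,d,\mathbf v)$ (current valuation in $\mathbb N_\bot^{\mathcal R}$ with $\mathbb N_\bot=\mathbb N\cup\{\bot\}$, input datum, next valuation); next register values not fixed by $\phi$ may be guessed subject to $\phi$. States are $\ell(\mathbf u)$; the initial state has all registers $\bot$; $\ell(\mathbf u)\xrightarrow{\sigma,d}\ell'(\mathbf u')$ if some edge $(\ell,\sigma,\phi,\ell')$ has $(\mathbf u,d,\mathbf u')\models\phi$. A GURA is a GRA in which each data word has at most one run from the initial state ending in an accepting location. For $\mathcal B$ (one register): a configuration is a (possibly infinite) set of states $\ell(u)$,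 $u\in\mathbb N_\bot$; $\mathrm{succ}(C,(\sigma,d))$ is the set of states reached by one $(\sigma,d)$-transition from states of $C$, extended to words; $C$ is accepting if it contains a state with accepting location; reachable if $C=\mathrm{succ}(\{\ell_{init}(\bot)\},w)$ for some data word $w$; coverable if contained in a reachable configuration; essentially coverable if every subset of at most two of its states is coverable. $\mathrm{supp}(C)$ is the set of $d\in\mathbb N$ such that either $\ell(d)\in C$ for some $\ell$ with $\{e:\ell(e)\in C\}$ finite, or $\ell(d)\notin C$ for some $\ell$ with $\{e:\ell(e)\in C\}$ cofinite. $C_d^+=\{\ell(d):\ell(d)\in C,\ \{e\in\mathbb N:\ell(e)\in C\}\text{ finite}\}$, $C_d^-=\{\ell(d):\ell(d)\notin C,\ \{e\in\mathbb N:\ell(e)\in C\}\text{ infinite}\}$. A synchronized configuration is a pair $(\ell(\mathbf d),C)$ of a state of $\mathcal A$ and a configuration of $\mathcal B$; $\mathcal S$ is their set; $(\ell(\mathbf d),C)\Rightarrow(\ell'(\mathbf d'),C')$ iff for some $(\sigma,d)$, $\ell(\mathbf d)\xrightarrow{\sigma,d}_{\mathcal A}\ell'(\mathbf d')$ and $\mathrm{succ}_{\mathcal B}(C,(\sigma,d))=C'$; ''reaches'' means via a finite $\Rightarrow$-path. $(\ell(\mathbf d),C)$ is bad if $\ell\in\mathcal L^{\mathcal A}_{acc}$ and $C$ is non-accepting. For $S=(\ell(\mathbf d),C)$ and $a,b\in\mathrm{supp}(C)$, $a\equiv_S b$ (indistinguishable) means $a,b$ do not occur in $\mathbf d$ and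 $\{\ell:\ell(a)\in C\}=\{\ell:\ell(b)\in C\}$. *)

From Stdlib Require List.
From mathcomp Require Import all_boot.
Set Implicit Arguments. Unset Strict Implicit. Unset Printing Implicit Defensive.

(* Data domain N_bot = option nat (None = bot). *)

(* Terms of guard formulas: #, r (current value), r-dot (next value). *)
Inductive term (R : Type) : Type :=
| THash : term R
| TCur : R -> term R
| TNext : R -> term R.

Inductive form (R : Type) : Type :=
| FEq : term R -> term R -> form R
| FTrue : form R
| FNot : form R -> form R
| FAnd : form R -> form R -> form R
| FOr : form R -> form R -> form R.

Definition term_val (R : Type) (u : R -> option nat) (d : nat) (v : R -> option nat)
  (t : term R) : option nat :=
  match t with
  | THash => Some d
  | TCur r => u r
  | TNext r => v r
  end.

Fixpoint sat (R : Type) (u : R -> option nat) (d : nat) (v : R -> option nat)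
  (phi : form R) : Prop :=
  match phi with
  | FEq t1 t2 => term_val u d v t1 = term_val u d v t2
  | FTrue => True
  | FNot f => ~ sat u d v f
  | FAnd f g => sat u d v f /\ sat u d v g
  | FOr f g => sat u d v f \/ sat u d v g
  end.

Record GRA (Sigma : finType) := mkGRA {
  regs : finType;
  locs : finType;
  l_init : locs;
  l_acc : pred locs;
  edges : seq (locs * Sigma * form regs * locs)
}.

Arguments regs {Sigma} g.
Arguments locs {Sigma} g.
Arguments l_init {Sigma} g.
Arguments l_acc {Sigma} g _.
Arguments edges {Sigma} g.

Definition state (Sigma : finType) (A : GRA Sigma) : Type :=
  (locs A * (regs A -> option nat))%type.

Definition init_state (Sigma : finType) (A : GRA Sigma) : state A :=
  (l_init A, fun _ => None).
Arguments init_state {Sigma} A.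

Definition step (Sigma : finType) (A : GRA Sigma) (s : state A) (a : Sigma * nat)
  (s' : state A) : Prop :=
  exists l1 sg phi l2, List.In (l1, sg, phi, l2) (edges A) /\
    l1 = s.1 /\ sg = a.1 /\ l2 = s'.1 /\ sat s.2 a.2 s'.2 phi.

Fixpoint run_from (Sigma : finType) (A : GRA Sigma) (s : state A)
  (w : seq (Sigma * nat)) (ss : seq (state A)) : Prop :=
  match w, ss with
  | [::], [::] => True
  | a :: w', s' :: ss' => step s a s' /\ run_from s' w' ss'
  | _, _ => False
  end.

Definition unambiguous (Sigma : finType) (A : GRA Sigma) : Prop :=
  forall (w : seq (Sigma * nat)) (ss1 ss2 : seq (state A)),
    run_from (init_state A) w ss1 -> l_acc A (last (init_state A) ss1).1 ->
    run_from (init_state A) w ss2 -> l_acc A (last (init_state A) ss2).1 ->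
    ss1 = ss2.

Definition one_register (Sigma : finType) (B : GRA Sigma) : Prop := #|regs B| = 1.

Definition val1 (Sigma : finType) (B : GRA Sigma) (u : option nat) : regs B -> option nat :=
  fun _ => u.
Arguments val1 {Sigma} B u _.

Definition config (Sigma : finType) (B : GRA Sigma) : Type := locs B * option nat -> Prop.

Definition succ (Sigma : finType) (B : GRA Sigma) (C : config B) (a : Sigma * nat) : config B :=
  fun s' => exists s, C s /\ step (s.1, val1 B s.2) a (s'.1, val1 B s'.2).

Fixpoint succw (Sigma : finType) (B : GRA Sigma) (C : config B) (w : seq (Sigma * nat))
  : config B :=
  match w with
  | [::] => C
  | a :: w' => succw (succ C a) w'
  end.

Definition init_config (Sigma : finType) (B : GRA Sigma) : config B :=
  fun s => s = (l_init B, None).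
Arguments init_config {Sigma} B _.

Definition accepting (Sigma : finType) (B : GRA Sigma) (C : config B) : Prop :=
  exists s, C s /\ l_acc B s.1.

Definition reachable (Sigma : finType) (B : GRA Sigma) (C : config B) : Prop :=
  exists w, forall s, C s <-> succw (init_config B) w s.

Definition coverable (Sigma : finType) (B : GRA Sigma) (C : config B) : Prop :=
  exists C', reachable C' /\ forall s, C s -> C' s.

Definition ess_coverable (Sigma : finType) (B : GRA Sigma) (C : config B) : Prop :=
  coverable (fun _ : locs B * option nat => False) /\
  forall s1 s2, C s1 -> C s2 -> coverable (fun s => s = s1 \/ s = s2).

Definition finite_nat (P : nat -> Prop) : Prop := exists n, forall e, P e -> e < n.
Definition cofinite_nat (P : nat -> Prop) : Prop := exists n, forall e, n <= e -> P e.

Definition supp (Sigma : finType) (B : GRA Sigma) (C : config B) (d : nat) : Prop :=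
  exists l : locs B,
    (C (l, Some d) /\ finite_nat (fun e => C (l, Some e))) \/
    (~ C (l, Some d) /\ cofinite_nat (fun e => C (l, Some e))).

Definition Cplus (Sigma : finType) (B : GRA Sigma) (C : config B) (d : nat) : config B :=
  fun s => exists l, s = (l, Some d) /\ C (l, Some d) /\ finite_nat (fun e => C (l, Some e)).

Definition Cminus (Sigma : finType) (B : GRA Sigma) (C : config B) (d : nat) : config B :=
  fun s => exists l, s = (l, Some d) /\ ~ C (l, Some d) /\ ~ finite_nat (fun e => C (l, Some e)).

Definition sconf (Sigma : finType) (A B : GRA Sigma) : Type := (state A * config B)%type.

Definition sstep (Sigma : finType) (A B : GRA Sigma) (S S' : sconf A B) : Prop :=
  exists a : Sigma * nat, step S.1 a S'.1 /\ forall s, S'.2 s <-> succ S.2 a s.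

Inductive sreaches (Sigma : finType) (A B : GRA Sigma) : sconf A B -> sconf A B -> Prop :=
| sreach_refl S : sreaches S S
| sreach_step S S' S'' : sstep S S' -> sreaches S' S'' -> sreaches S S''.

Definition bad (Sigma : finType) (A B : GRA Sigma) (S : sconf A B) : Prop :=
  l_acc A S.1.1 /\ ~ accepting S.2.

Definition reaches_bad (Sigma : finType) (A B : GRA Sigma) (S : sconf A B) : Prop :=
  exists S', sreaches S S' /\ bad S'.

Definition indist (Sigma : finType) (A B : GRA Sigma) (S : sconf A B) (a b : nat) : Prop :=
  (forall r, S.1.2 r <> Some a) /\ (forall r, S.1.2 r <> Some b) /\
  (forall l : locs B, S.2 (l, Some a) <-> S.2 (l, Some b)).

From Pilot Require Import Defs.
From mathcomp Require Import all_boot zify.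
From Stdlib Require Import Classical FunctionalExtensionality.
Set Implicit Arguments. Unset Strict Implicit. Unset Printing Implicit Defensive.

(* Three facts drive the argument.
   (1) Data symmetry: an injective renaming of data values maps runs to runs,
       and any two distinct values can be renamed to any two distinct values.
   (2) Disjointness: since B is unambiguous, two distinct states of an
       essentially coverable configuration (both reached by a common word)
       accept no common word; with (1), l1(x1), l2(x2) with x1 <> x2 accept no
       common word as soon as C contains l1(c1), l2(c2) with c1 <> c2.
   (3) A bad synchronized configuration is reachable from (s, C) iff some word
       is accepted by A from s and by no state of C (a "bad word").
   The two directions then transfer bad words between C and
   C' = (C \ C_b^+) u C_b^-: from C to C' using the a/b-swap of the word, from
   C' to C using the b/f-swap for a sufficiently fresh value f. *)

Notation vals w := [seq p.2 | p <- w].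

Lemma infinite_avoid (P F : nat -> Prop) :
  ~ finite_nat P -> finite_nat F -> exists e, P e /\ ~ F e.
Proof.
move=> infP [n hF]; apply: NNPP => none; apply: infP; exists n => e Pe.
by apply: hF; apply: NNPP => nFe; apply: none; exists e.
Qed.

Lemma finite_nat_union (P Q : nat -> Prop) :
  finite_nat P -> finite_nat Q -> finite_nat (fun e => P e \/ Q e).
Proof.
move=> [m hP] [n hQ]; exists (maxn m n) => e [/hP|/hQ]; lia.
Qed.

Lemma finite_nat_seq (s : seq nat) : finite_nat (fun e => e \in s).
Proof.
elim: s => [|x s [n hn]]; first by exists 0.
exists (maxn x.+1 n) => e; rewrite in_cons => /orP[/eqP->|/hn]; lia.
Qed.

Lemma finite_nat_exists (T : finType) (P : T -> nat -> Prop) :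
  (forall t, finite_nat (P t)) -> finite_nat (fun e => exists t, P t e).
Proof.
move=> finP.
suff [n hn] : finite_nat (fun e => exists2 t, t \in enum T & P t e).
  by exists n => e [t Pte]; apply: hn; exists t; rewrite ?mem_enum.
elim: (enum T) => [|t s [n hn]]; first by exists 0 => e [].
have [m hm] := finP t; exists (maxn m n) => e [t'].
rewrite in_cons => /orP[/eqP-> /hm|ts Pte]; first lia.
by have := hn e (ex_intro2 _ _ t' ts Pte); lia.
Qed.

Definition transp (x y n : nat) : nat := if n == x then y else if n == y then x else n.

Lemma transpL x y : transp x y x = y. Proof. by rewrite /transp eqxx. Qed.

Lemma transpR x y : transp x y y = x.
Proof. by rewrite /transp; case: eqP => [->|_]; rewrite ?eqxx. Qed.

Lemma transp_id x y n : n <> x -> n <> y -> transp x y n = n.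
Proof. by move=> /eqP/negbTE nx /eqP/negbTE ny; rewrite /transp nx ny. Qed.

Lemma transpK x y : involutive (transp x y).
Proof.
move=> n; case: (eqVneq n x) => [->|nx]; first by rewrite transpL transpR.
case: (eqVneq n y) => [->|ny]; first by rewrite transpR transpL.
by rewrite !transp_id //; apply/eqP.
Qed.

Lemma transp_inj x y : injective (transp x y).
Proof. exact: can_inj (transpK x y). Qed.

Lemma two_point_renaming (x1 x2 c1 c2 : nat) : x1 <> x2 -> c1 <> c2 ->
  exists f : nat -> nat, [/\ injective f, f x1 = c1 & f x2 = c2].
Proof.
move=> x12 c12; set y := transp x1 c1 x2.
have c1y : c1 <> y by rewrite /y -{1}(transpL x1 c1) => /transp_inj.
exists (transp y c2 \o transp x1 c1); split.
- exact: inj_comp (@transp_inj _ _) (@transp_inj _ _).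
- by rewrite /= transpL transp_id.
- by rewrite /= transpL.
Qed.

Definition rename_word (Sigma : Type) (f : nat -> nat) (w : seq (Sigma * nat))
  : seq (Sigma * nat) := [seq (p.1, f p.2) | p <- w].

Lemma rename_wordK (Sigma : Type) (f g : nat -> nat) :
  cancel f g -> cancel (@rename_word Sigma f) (rename_word g).
Proof. by move=> fK; apply: mapK => -[s n] /=; rewrite fK. Qed.

Lemma rename_word_id (Sigma : Type) (f : nat -> nat) (w : seq (Sigma * nat)) :
  (forall n, n \in vals w -> f n = n) -> rename_word f w = w.
Proof.
elim: w => //= -[s n] w IH fid; rewrite fid ?mem_head // IH // => m wm.
by apply: fid; rewrite in_cons wm orbT.
Qed.

Section Renaming.
Variables (Sigma : finType) (G : GRA Sigma) (f : nat -> nat).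
Hypothesis f_inj : injective f.

Definition rename_val (u : regs G -> option nat) : regs G -> option nat :=
  fun r => omap f (u r).

Definition rename_state (s : state G) : state G := (s.1, rename_val s.2).

Lemma sat_rename u d v (phi : form (regs G)) :
  sat u d v phi <-> sat (rename_val u) (f d) (rename_val v) phi.
Proof.
have omap_inj : injective (omap f) by case=> [x|] [y|] //= [/f_inj ->].
have term_rename t :
    term_val (rename_val u) (f d) (rename_val v) t = omap f (term_val u d v t).
  by case: t.
elim: phi => /=; try tauto.
by move=> t1 t2; rewrite !term_rename; split=> [->|/omap_inj].
Qed.

Lemma step_rename s a s' :
  step s a s' -> step (rename_state s) (a.1, f a.2) (rename_state s').
Proof.
case=> l1 [sg [phi [l2 [e_in [e1 [e2 [e3 hsat]]]]]]].
exists l1, sg, phi, l2; do 4 split=> //.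
exact: (sat_rename _ _ _ _).1 hsat.
Qed.

Lemma run_rename s w ss : run_from s w ss ->
  run_from (rename_state s) (rename_word f w) (map rename_state ss).
Proof.
elim: w s ss => [|a w IH] s [|s' ss] //= [hstep hrun].
by split; [apply: step_rename | apply: IH].
Qed.

End Renaming.

Section OneRegister.
Variables (Sigma : finType) (B : GRA Sigma).

Definition bstate : Type := (locs B * option nat)%type.

Definition full (s : bstate) : state B := (s.1, Defs.val1 B s.2).

Fixpoint brun (s : bstate) (w : seq (Sigma * nat)) (ss : seq bstate) : Prop :=
  match w, ss with
  | [::], [::] => True
  | a :: w', s' :: ss' => step (full s) a (full s') /\ brun s' w' ss'
  | _, _ => False
  end.

Definition accepts (s : bstate) (w : seq (Sigma * nat)) : Prop :=
  exists ss, brun s w ss /\ l_acc B (last s ss).1.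

Definition rename_bstate (f : nat -> nat) (s : bstate) : bstate := (s.1, omap f s.2).

Lemma accepts_rename f s w : injective f ->
  accepts s w -> accepts (rename_bstate f s) (rename_word f w).
Proof.
move=> f_inj [ss [hrun hacc]]; exists (map (rename_bstate f) ss).
split; last by rewrite last_map.
elim: w s ss hrun {hacc} => [|a w IH] s [|s' ss] //= [hstep hrun].
by split; [exact: (step_rename f_inj hstep) | exact: IH].
Qed.

Lemma accepts_fresh (l : locs B) x y w : x \notin vals w -> y \notin vals w ->
  accepts (l, Some x) w -> accepts (l, Some y) w.
Proof.
move=> xw yw /(accepts_rename (@transp_inj x y)).
rewrite rename_word_id /rename_bstate /= ?transpL // => n nw.
by apply: transp_id => e; subst n; [move: xw | move: yw]; rewrite nw.
Qed.

Lemma succw_runs (C : config B) w s :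
  succw C w s <-> exists s0 ss, [/\ C s0, brun s0 w ss & last s0 ss = s].
Proof.
elim: w C s => [|a w IH] C s /=.
  split=> [Cs|[s0 [ss [C0 hrun <-]]]]; first by exists s, [::].
  by case: ss hrun.
rewrite IH; split.
  by move=> [s1 [ss [[s0 [C0 hstep]] hrun <-]]]; exists s0, (s1 :: ss).
move=> [s0 [[|s1 ss] [C0 //= [hstep hrun] <-]]].
by exists s1, ss; split=> //; exists s0.
Qed.

Lemma brun_cat s u w ss1 ss2 :
  brun s u ss1 -> brun (last s ss1) w ss2 -> brun s (u ++ w) (ss1 ++ ss2).
Proof.
elim: u s ss1 => [|a u IH] s [|s1 ss1] //= [hstep hrun] hrun2.
by split; last exact: IH.
Qed.

Lemma brun_size s w ss : brun s w ss -> size ss = size w.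
Proof.
elim: w s ss => [|a w IH] s [|s1 ss] //= [_ hrun].
by rewrite (IH _ _ hrun).
Qed.

Lemma brun_full s w ss : brun s w ss -> run_from (full s) w (map full ss).
Proof.
elim: w s ss => [|a w IH] s [|s1 ss] //= [hstep hrun].
by split; last exact: IH.
Qed.

Hypothesis hB1 : one_register B.
Hypothesis hB : unambiguous B.

Lemma full_inj : injective full.
Proof.
have [r _] : exists r, r \in regs B by apply/card_gt0P; rewrite hB1.
by move=> [l1 o1] [l2 o2] [-> /(congr1 (fun v => v r)) e12]; congr (_, _).
Qed.

Lemma unambiguous_reached u w ss1 ss2 :
  brun (l_init B, None) u ss1 -> brun (l_init B, None) u ss2 ->
  accepts (last (l_init B, None) ss1) w -> accepts (last (l_init B, None) ss2) w ->
  last (l_init B, None) ss1 = last (l_init B, None) ss2.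
Proof.
move=> run1 run2 [t1 [rt1 acc1]] [t2 [rt2 acc2]].
have accepting_run ss t : brun (l_init B, None) u ss ->
    brun (last (l_init B, None) ss) w t ->
    l_acc B (last (last (l_init B, None) ss) t).1 ->
    run_from (init_state B) (u ++ w) (map full (ss ++ t)) /\
    l_acc B (last (init_state B) (map full (ss ++ t))).1.
  move=> hss ht hacc; split; first exact: (brun_full (brun_cat hss ht)).
  by rewrite (last_map full _ (l_init B, None)) last_cat.
have [R1 L1] := accepting_run _ _ run1 rt1 acc1.
have [R2 L2] := accepting_run _ _ run2 rt2 acc2.
have /(inj_map full_inj)/(congr1 (take (size u))) := hB R1 L1 R2 L2.
by rewrite !take_size_cat ?(brun_size run1) ?(brun_size run2) // => ->.
Qed.

(* In an essentially coverable configuration, distinct states accept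
   disjoint languages: any two of its states are reached by a common word. *)
Lemma ess_coverable_disjoint (C : config B) s1 s2 w : ess_coverable C ->
  C s1 -> C s2 -> accepts s1 w -> accepts s2 w -> s1 = s2.
Proof.
move=> [_ cov] C1 C2 acc1 acc2.
have [C2' [[u reach] sub]] := cov s1 s2 C1 C2.
have reached s : s = s1 \/ s = s2 ->
    exists2 ss, brun (l_init B, None) u ss & last (l_init B, None) ss = s.
  by move=> /sub /reach /succw_runs [_ [ss [-> run <-]]]; exists ss.
have [ss1 run1 e1] := reached s1 (or_introl erefl).
have [ss2 run2 e2] := reached s2 (or_intror erefl).
rewrite -e1 -e2 in acc1 acc2 *.
exact: unambiguous_reached run1 run2 acc1 acc2.
Qed.

Lemma renamed_disjoint (C : config B) (l1 l2 : locs B) c1 c2 x1 x2 w :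
  ess_coverable C -> C (l1, Some c1) -> C (l2, Some c2) -> c1 <> c2 -> x1 <> x2 ->
  accepts (l1, Some x1) w -> accepts (l2, Some x2) w -> False.
Proof.
move=> hC C1 C2 c12 x12 acc1 acc2.
have [f [f_inj f1 f2]] := two_point_renaming x12 c12.
have := accepts_rename f_inj acc1; have := accepts_rename f_inj acc2.
rewrite /rename_bstate /= f1 f2 => acc2' acc1'.
by case: (ess_coverable_disjoint hC C1 C2 acc1' acc2').
Qed.

End OneRegister.

Section Synchronized.
Variables (Sigma : finType) (A B : GRA Sigma).

Definition accepts_A (s : state A) (w : seq (Sigma * nat)) : Prop :=
  exists ss, run_from s w ss /\ l_acc A (last s ss).1.

Definition bad_word (s : state A) (C : config B) (w : seq (Sigma * nat)) : Prop :=
  accepts_A s w /\ forall s0, C s0 -> ~ accepts s0 w.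

Lemma sreaches_run (S S' : sconf A B) : sreaches S S' ->
  exists w ss, [/\ run_from S.1 w ss, last S.1 ss = S'.1 &
                   forall s, S'.2 s <-> succw S.2 w s].
Proof.
elim=> [S0|S0 S1 S2 [a [hstep hsucc]] _ [w [ss [hrun hlast hS2]]]].
  by exists [::], [::].
exists (a :: w), (S1.1 :: ss); split=> // s; rewrite hS2 /= !succw_runs.
by split=> -[s0 [ss' [C0 r0 e0]]]; exists s0, ss'; split=> //; apply hsucc.
Qed.

Lemma run_sreaches (s : state A) (C : config B) w ss : run_from s w ss ->
  sreaches (s, C) (last s ss, succw C w).
Proof.
elim: w s C ss => [|a w IH] s C [|s' ss] //= => [_|[hstep hrun]].
  exact: sreach_refl.
by apply: sreach_step (IH s' (succ C a) ss hrun); exists a.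
Qed.

Lemma reaches_bad_word (s : state A) (C : config B) :
  reaches_bad (s, C) <-> exists w, bad_word s C w.
Proof.
split.
  move=> [S' [/sreaches_run [w [ss [hrun hlast hS']]] [hacc hnacc]]].
  exists w; split; first by exists ss; rewrite hlast.
  move=> s0 C0 [t [ht hl]]; apply: hnacc; exists (last s0 t); split=> //.
  by apply/hS'/succw_runs; exists s0, t.
move=> [w [[ss [hrun hacc]] hrej]].
exists (last s ss, succw C w); split; first exact: run_sreaches.
split=> // -[s' [/succw_runs [s0 [t [C0 ht <-]]] hl]].
by apply: (hrej s0 C0); exists t.
Qed.

Lemma not_bad_acceptor (s : state A) (C : config B) w :
  accepts_A s w -> ~ bad_word s C w -> exists s0, C s0 /\ accepts s0 w.
Proof.
move=> hA nbad; apply: NNPP => none; apply: nbad; split=> // s0 C0 acc.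
by apply: none; exists s0.
Qed.

Lemma accepts_A_transp (l : locs A) (d : regs A -> option nat) x y w :
  (forall r, d r <> Some x) -> (forall r, d r <> Some y) ->
  accepts_A (l, d) w -> accepts_A (l, d) (rename_word (transp x y) w).
Proof.
move=> dx dy [ss [hrun hacc]].
have fixed : rename_state (transp x y) (l, d) = (l, d).
  congr (_, _); apply: functional_extensionality => r.
  by rewrite /rename_val /=; case e: (d r) => [n|] //=; rewrite transp_id // => en;
    [apply: (dx r) | apply: (dy r)]; rewrite e en.
exists (map (rename_state (transp x y)) ss); rewrite -{1 2}fixed last_map.
by split=> //; exact: (run_rename (@transp_inj x y) hrun).
Qed.

End Synchronized.

(* The configuration of the proposition, (C \ C_b^+) u C_b^-: the value b is
   made generic, i.e. l(b) belongs to it iff the l-row of C is infinite. *)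

Section GenericValue.
Variables (Sigma : finType) (B : GRA Sigma) (C : config B) (b : nat).

Definition row (l : locs B) : nat -> Prop := fun e => C (l, Some e).

Definition genericize : config B := fun s => (C s /\ ~ Cplus C b s) \/ Cminus C b s.

Lemma genericize_cases s : genericize s ->
  C s \/ exists l, s = (l, Some b) /\ ~ finite_nat (row l).
Proof. by case=> [[Cs _]|[l [-> [_ inf]]]]; [left | right; exists l]. Qed.

Lemma genericize_keep s : C s -> (forall l, s <> (l, Some b)) -> genericize s.
Proof. by move=> Cs sb; left; split=> // -[l [e _]]; apply: (sb l). Qed.

Lemma genericize_infinite l : ~ finite_nat (row l) -> genericize (l, Some b).
Proof.
move=> inf; case: (classic (C (l, Some b))) => Cb; last by right; exists l.
by left; split=> // -[l' [[<-] [_ fin]]].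
Qed.

End GenericValue.

Section Proposition6.
Variables (Sigma : finType) (A B : GRA Sigma).
Hypotheses (hB1 : one_register B) (hB : unambiguous B).
Variables (l : locs A) (d : regs A -> option nat) (C : config B) (a b : nat).
Hypotheses (hC : ess_coverable C) (ab : a <> b).
Hypotheses (a_free : forall r, d r <> Some a) (b_free : forall r, d r <> Some b).
Hypothesis same_rows : forall lb, C (lb, Some a) <-> C (lb, Some b).

Lemma transp_ab_config s : C s -> C (rename_bstate (transp a b) s).
Proof.
case: s => lb [x|] Cs //; rewrite /rename_bstate /=.
case: (eqVneq x a) => [xa|xa]; first by rewrite xa transpL -same_rows -xa.
case: (eqVneq x b) => [xb|xb]; first by rewrite xb transpR same_rows -xb.
by rewrite transp_id //; apply/eqP.
Qed.

(* From C to C': if neither w nor its a/b-swap is bad for C', they are accepted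
   by generic copies l1(b), l2(b) of infinite rows, i.e. l1(b) and l2(a) accept
   w; picking distinct witnesses in both rows contradicts disjointness. *)
Lemma bad_for_genericize w :
  bad_word (l, d) C w -> exists w', bad_word (l, d) (genericize C b) w'.
Proof.
move=> [accA rejC]; set w' := rename_word (transp a b) w.
have ww' : rename_word (transp a b) w' = w by exact: (rename_wordK (transpK a b) w).
have rejC' s : C s -> ~ accepts s w'.
  move=> Cs /(accepts_rename (@transp_inj a b)); rewrite ww'.
  exact: rejC (transp_ab_config Cs).
have generic_acceptor v : (forall s, C s -> ~ accepts s v) -> accepts_A (l, d) v ->
    ~ bad_word (l, d) (genericize C b) v ->
    exists l1, ~ finite_nat (row C l1) /\ accepts (l1, Some b) v.
  move=> rej hA /(not_bad_acceptor hA) [s [/genericize_cases [Cs|[l1 [-> inf]]] acc]].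
    by case: (rej s Cs).
  by exists l1.
case: (classic (bad_word (l, d) (genericize C b) w)) => [|nbad]; first by exists w.
case: (classic (bad_word (l, d) (genericize C b) w')) => [|nbad']; first by exists w'.
have [l1 [inf1 acc1]] := generic_acceptor w rejC accA nbad.
have [l2 [inf2 acc2]] :=
  generic_acceptor w' rejC' (accepts_A_transp a_free b_free accA) nbad'.
move: acc2 => /(accepts_rename (@transp_inj a b)); rewrite ww' /rename_bstate /= transpR.
move=> acc2; have [c1 [C1 _]] := infinite_avoid inf1 (finite_nat_seq [::]).
have [c2 [C2 c21]] := infinite_avoid inf2 (finite_nat_seq [:: c1]).
exfalso; apply: (renamed_disjoint hB1 hB hC C1 C2 _ _ acc1 acc2).
- by move=> c12; apply: c21; rewrite c12 mem_head.
- by move=> /esym.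
Qed.

(* For l(b) in C and f fresh for w, the copy l(f) rejects w when C' does:
   in a finite row, l(a) and l(b) would accept the fresh copies l(f), l(f+1);
   in an infinite row, a fresh member l(e), which lies in C', would. *)
Lemma fresh_copy_rejects (lb : locs B) f w :
  (forall s, genericize C b s -> ~ accepts s w) -> C (lb, Some b) ->
  f \notin vals w -> f.+1 \notin vals w -> ~ accepts (lb, Some f) w.
Proof.
move=> rej Cb fw f1w acc.
case: (classic (finite_nat (row C lb))) => [fin|inf].
  have acc1 : accepts (lb, Some f.+1) w by apply: accepts_fresh acc.
  apply: (renamed_disjoint hB1 hB hC ((same_rows lb).2 Cb) Cb ab _ acc acc1).
  by move=> /n_Sn.
have [e [Ce ebw]] := infinite_avoid inf (finite_nat_seq (b :: vals w)).
move: ebw => /negP; rewrite in_cons negb_or => /andP[/eqP eb ew].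
apply: (rej (lb, Some e)); last exact: accepts_fresh acc.
by apply: genericize_keep => // l' [eb']; apply: eb; rewrite eb'.
Qed.

(* From C' to C: for a value f beyond the values of w and d and the finite rows
   of C, the word obtained by swapping b and f is bad for C. *)
Lemma bad_from_genericize w :
  bad_word (l, d) (genericize C b) w -> exists w', bad_word (l, d) C w'.
Proof.
move=> [accA rej].
pose forbidden e := e \in vals w \/ (exists r, d r = Some e) \/
  exists lb, finite_nat (row C lb) /\ row C lb e.
have [f hf] : finite_nat forbidden.
  apply: finite_nat_union (finite_nat_seq _) (finite_nat_union _ _).
    apply: finite_nat_exists => r.
    by exists (if d r is Some n then n.+1 else 0) => e ->.
  apply: finite_nat_exists => lb.
  case: (classic (finite_nat (row C lb))) => [[n hn]|inf]; last by exists 0 => e [].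
  by exists n => e [_ /hn].
have fresh e : forbidden e -> e < f by apply: hf.
have fw : f \notin vals w by apply/negP => fw; have := fresh f (or_introl fw); lia.
have f1w : f.+1 \notin vals w.
  by apply/negP => f1w; have := fresh f.+1 (or_introl f1w); lia.
exists (rename_word (transp b f) w); split.
  apply: accepts_A_transp => // r df.
  by have := fresh f (or_intror (or_introl (ex_intro _ r df))); lia.
(* a state l(o) of C accepting the swapped word yields the acceptor
   l(transp b f o) of w, which lies in C' unless o = b *)
move=> [lb o] Cs /(accepts_rename (@transp_inj b f)).
rewrite (rename_wordK (transpK b f)) /rename_bstate /=.
case: o Cs => [x|] Cs /= acc; last by apply: (rej (lb, None) _ acc); apply: genericize_keep.
case: (eqVneq x b) => [xb|xnb].
  by move: Cs acc; rewrite xb transpL => Cb; exact: (fresh_copy_rejects rej Cb fw f1w).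
case: (eqVneq x f) => [xf|xnf].
  move: Cs acc; rewrite xf transpR => Cs; apply: rej; apply: genericize_infinite => fin.
  by have := fresh f (or_intror (or_intror (ex_intro _ lb (conj fin Cs)))); rewrite ltnn.
move: acc; rewrite transp_id; try exact/eqP.
by apply: rej; apply: genericize_keep => // l' [_ xb]; move: xnb; rewrite xb eqxx.
Qed.

End Proposition6.

Theorem proposition6 (Sigma : finType) (A B : GRA Sigma)
  (hB1 : one_register B) (hB : unambiguous B)
  (l : locs A) (d : regs A -> option nat) (C : config B) (a b : nat) :
  ess_coverable C -> a <> b -> supp C a -> supp C b ->
  indist ((l, d), C) a b ->
  (reaches_bad ((l, d), C) <->
   reaches_bad ((l, d), (fun s => (C s /\ ~ Cplus C b s) \/ Cminus C b s) : config B)).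
Proof.
move=> hC ab _ _ [a_free [b_free same_rows]].
rewrite !reaches_bad_word; split=> -[w bad].
  exact: (bad_for_genericize hB1 hB hC ab a_free b_free same_rows bad).
exact: (bad_from_genericize hB1 hB hC ab b_free same_rows bad).
Qed.
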